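(* Assume $\lambda_2>\mu$ and $M>\lambda_2-\mu$ (so $\widetilde\lambda>0$), and let $\widehat C>0$. Then for all sufficiently small $\varepsilon>0$ the following holds. Suppose $(n_{1a},n_{1d},n_2)\in(0,\infty)^3$ satisfies - $n_2\in(\bar n_2-2\sqrt\varepsilon,\bar n_2+2\sqrt\varepsilon)$, - $n_{1a}+n_{1d}\in(\varepsilon/\widehat C,\sqrt\varepsilon)$, - $n_{1d}/n_{1a}=\pi_{1d}/\pi_{1a}$. Then $$\frac{pC(n_{1a}+n_2)}{\kappa\mu+\sigma}>\frac{n_{1d}}{n_{1a}}>\frac{\mu-\lambda_1+C(n_2+n_{1a})+\tau n_2}{\sigma}.$$
   Context: Let $\lambda_1,\lambda_2,\mu,C,\sigma,\tau>0$, $p\in(0,1)$ and $\kappa\ge 0$. Set $$M:=\frac{Cp\sigma}{\tau(\kappa\mu+\sigma)}(\lambda_2-\mu)+\frac{C}{\tau}(\lambda_1-\lambda_2),\qquad \bar n_2:=\max(\lambda_2-\mu,0)/C.$$ Let $$J:=\begin{pmatrix}\lambda_1-\lambda_2-\frac{\tau}{C}(\lambda_2-\mu) & p(\lambda_2-\mu)\\ \sigma & -\kappa\mu-\sigma\end{pmatrix}.$$ Let $\widetilde\lambda$ be the eigenvalue of $J$ with the largest real part. When $\lambda_2>\mu$, $\widetilde\lambda$ is real (its Perron root). Let $(\pi_{1a},\pi_{1d})$ be the left eigenvector of $J$ for $\widetilde\lambda$ with positive entries and $\pi_{1a}+\pi_{1d}=1$. *)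

From Stdlib Require Import Reals.
From Coquelicot Require Import Coquelicot.
Open Scope R_scope.

Definition J11 (l1 l2 mu C tau : R) : R := l1 - l2 - tau / C * (l2 - mu).
Definition J12 (l2 mu p : R) : R := p * (l2 - mu).
Definition J21 (sigma : R) : R := sigma.
Definition J22 (mu sigma kappa : R) : R := - kappa * mu - sigma.

Definition Mconst (l1 l2 mu C sigma tau p kappa : R) : R :=
  C * p * sigma / (tau * (kappa * mu + sigma)) * (l2 - mu) + C / tau * (l1 - l2).
Definition nbar2 (l2 mu C : R) : R := Rmax (l2 - mu) 0 / C.

Definition is_eig2 (a b c d : R) (z : C) : Prop :=
  Cminus (Cmult (Cminus (RtoC a) z) (Cminus (RtoC d) z)) (RtoC (b * c)) = RtoC 0.

Definition is_top_eig2 (a b c d : R) (lt : C) : Prop :=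
  is_eig2 a b c d lt /\ forall z : C, is_eig2 a b c d z -> Re z <= Re lt.

Definition is_left_eigvec2 (a b c d lt x y : R) : Prop :=
  x * a + y * c = lt * x /\ x * b + y * d = lt * y.

From Stdlib Require Import Reals Lra Psatz.
From Coquelicot Require Import Coquelicot.
Open Scope R_scope.

(* Write r := pi1d / pi1a and K := kappa*mu + sigma.  Dividing the
   left-eigenvector equations of J by pi1a gives two linear relations between
   r and the eigenvalue lt:  J11 + r*sigma = lt  and  p*(l2-mu) - r*K = lt*r.
   The hypothesis M > l2 - mu is a rescaling of det J < 0; for a 2x2 matrix
   with positive off-diagonal entries and negative determinant, an eigenvalue
   carrying a positive left eigenvector is positive.  Both claimed inequalities
   for n1d/n1a = r then differ from the two relations only by error terms of
   size O(sqrt eps) (because n2 is within 2 sqrt eps of nbar2 = (l2-mu)/C and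
   n1a < sqrt eps), and these errors are absorbed by lt*r and lt once sqrt eps
   is below a threshold proportional to lt. *)

Lemma left_eigvec2_ratio (a b c d lt x y : R) :
  0 < x -> is_left_eigvec2 a b c d lt x y ->
  a + (y / x) * c = lt /\ b + (y / x) * d = lt * (y / x).
Proof.
  intros Hx [E1 E2].
  split.
  - apply (Rmult_eq_reg_r x); [| lra].
    replace ((a + y / x * c) * x) with (x * a + y * c) by (field; lra). lra.
  - apply (Rmult_eq_reg_r x); [| lra].
    replace ((b + y / x * d) * x) with (x * b + y * d) by (field; lra).
    replace (lt * (y / x) * x) with (lt * y) by (field; lra). lra.
Qed.

(* Perron-type sign fact: if b, c > 0, the eigenvalue lt has a left
   eigenvector of positive slope r, and det < 0, then lt > 0.  Indeed the
   relations give lt - a = r*c > 0, lt - d = b/r > 0 and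
   (lt - a)(lt - d) = b*c; if lt <= 0 this product would be at most a*d. *)
Lemma perron_root2_pos (a b c d lt r : R) :
  0 < r -> a + r * c = lt -> b + r * d = lt * r ->
  0 < b -> 0 < c ->
  a * d - b * c < 0 -> 0 < lt.
Proof.
  intros Hr E1 E2 Hb Hc Hdet.
  assert (Ha : 0 < lt - a) by nra.
  assert (Hd : 0 < lt - d) by nra.
  assert (Hprod : r * ((lt - a) * (lt - d)) = r * (b * c)) by nra.
  apply Rmult_eq_reg_l in Hprod; [| lra].
  destruct (Rle_or_lt lt 0) as [Hle |]; [exfalso | assumption].
  assert ((lt - a) * (lt - d) <= (- a) * (- d)) by
    (apply Rmult_le_compat; lra).
  nra.
Qed.

Lemma Mconst_excess (l1 l2 mu C sigma tau p kappa : R) :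
  0 < C -> 0 < tau -> 0 < kappa * mu + sigma ->
  Mconst l1 l2 mu C sigma tau p kappa - (l2 - mu) =
  - (C / (tau * (kappa * mu + sigma))) *
    (J11 l1 l2 mu C tau * J22 mu sigma kappa - J12 l2 mu p * J21 sigma).
Proof.
  intros HC Htau HK.
  unfold Mconst, J11, J12, J21, J22. field. lra.
Qed.

Lemma det_J_neg (l1 l2 mu C sigma tau p kappa : R) :
  0 < C -> 0 < tau -> 0 < kappa * mu + sigma ->
  Mconst l1 l2 mu C sigma tau p kappa > l2 - mu ->
  J11 l1 l2 mu C tau * J22 mu sigma kappa - J12 l2 mu p * J21 sigma < 0.
Proof.
  intros HC Htau HK HM.
  pose proof (Mconst_excess l1 l2 mu C sigma tau p kappa HC Htau HK) as E.
  assert (0 < C / (tau * (kappa * mu + sigma))) by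
    (apply Rdiv_lt_0_compat; nra).
  nra.
Qed.

Lemma nbar2_spec (l2 mu C : R) :
  0 < C -> l2 > mu -> C * nbar2 l2 mu C = l2 - mu.
Proof.
  intros HC Hl. unfold nbar2. rewrite Rmax_left by lra. field. lra.
Qed.

(* Upper bound: the relation r*K = p*(l2-mu) - lt*r survives the perturbation
   n2 > nbar - 2s as long as the error 2*p*C*s is below lt*r. *)
Lemma ratio_upper_bound (l2 mu C p K lt r nb n1a n2 s : R) :
  0 < C -> 0 < p -> 0 < K -> 0 < n1a ->
  C * nb = l2 - mu -> nb - 2 * s < n2 ->
  r * K = p * (l2 - mu) - lt * r -> 2 * p * C * s <= lt * r ->
  r < p * C * (n1a + n2) / K.
Proof.
  intros HC Hp HK Hn1a Hnb Hn2 Er Hs.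
  apply (Rmult_lt_reg_r K); [assumption |].
  replace (p * C * (n1a + n2) / K * K) with (p * C * (n1a + n2)) by (field; lra).
  assert (HpC : 0 < p * C) by nra.
  assert (p * C * (nb - 2 * s) < p * C * n2) by (apply Rmult_lt_compat_l; lra).
  nra.
Qed.

(* Lower bound: the relation r*sigma = lt - J11 survives the perturbations
   n2 < nbar + 2s and n1a < s as long as the error s*(3C + 2 tau) is below lt. *)
Lemma ratio_lower_bound (l1 l2 mu C tau sigma lt r nb n1a n2 s : R) :
  0 < C -> 0 < tau -> 0 < sigma ->
  C * nb = l2 - mu -> n2 < nb + 2 * s -> n1a < s ->
  r * sigma = lt - J11 l1 l2 mu C tau -> s * (3 * C + 2 * tau) <= lt ->
  (mu - l1 + C * (n2 + n1a) + tau * n2) / sigma < r.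
Proof.
  intros HC Htau Hsig Hnb Hn2 Hn1a Er Hs.
  apply (Rmult_lt_reg_r sigma); [assumption |].
  replace ((mu - l1 + C * (n2 + n1a) + tau * n2) / sigma * sigma)
    with (mu - l1 + C * (n2 + n1a) + tau * n2) by (field; lra).
  assert (Htnb : tau / C * (l2 - mu) = tau * nb) by (rewrite <- Hnb; field; lra).
  unfold J11 in Er. rewrite Htnb in Er.
  assert (C * n2 < C * (nb + 2 * s)) by (apply Rmult_lt_compat_l; lra).
  assert (tau * n2 < tau * (nb + 2 * s)) by (apply Rmult_lt_compat_l; lra).
  assert (C * n1a < C * s) by (apply Rmult_lt_compat_l; lra).
  nra.
Qed.

Lemma small_scale_exists (A B u v : R) :
  0 < A -> 0 < B -> 0 < u -> 0 < v ->
  exists s0, 0 < s0 /\ forall s, 0 <= s <= s0 -> s * A <= u /\ s * B <= v.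
Proof.
  intros HA HB Hu Hv.
  exists (Rmin (u / A) (v / B)).
  split; [apply Rmin_pos; apply Rdiv_lt_0_compat; assumption |].
  intros s [Hs0 Hs].
  pose proof (Rmin_l (u / A) (v / B)). pose proof (Rmin_r (u / A) (v / B)).
  split.
  - replace u with (u / A * A) by (field; lra).
    apply Rmult_le_compat_r; lra.
  - replace v with (v / B * B) by (field; lra).
    apply Rmult_le_compat_r; lra.
Qed.

Lemma sqrt_lt_of_lt_square (eps s0 : R) :
  0 < s0 -> 0 < eps < s0 * s0 -> sqrt eps < s0.
Proof.
  intros Hs0 He.
  rewrite <- (sqrt_square s0) by lra.
  apply sqrt_lt_1_alt. lra.
Qed.

Theorem lemmaD4 (l1 l2 mu C sigma tau p kappa Chat : R)
  (Hl1 : 0 < l1) (Hl2 : 0 < l2) (Hmu : 0 < mu) (HC : 0 < C)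
  (Hsigma : 0 < sigma) (Htau : 0 < tau) (Hp0 : 0 < p) (Hp1 : p < 1)
  (Hkappa : 0 <= kappa)
  (Hl2mu : l2 > mu)
  (HM : Mconst l1 l2 mu C sigma tau p kappa > l2 - mu)
  (HChat : 0 < Chat)
  (lt pi1a pi1d : R)
  (Hlt : is_top_eig2 (J11 l1 l2 mu C tau) (J12 l2 mu p) (J21 sigma)
           (J22 mu sigma kappa) (RtoC lt))
  (Hpi : is_left_eigvec2 (J11 l1 l2 mu C tau) (J12 l2 mu p) (J21 sigma)
           (J22 mu sigma kappa) lt pi1a pi1d)
  (Hpia : 0 < pi1a) (Hpid : 0 < pi1d) (Hpisum : pi1a + pi1d = 1) :
  exists eps0 : R, 0 < eps0 /\
    forall eps : R, 0 < eps < eps0 ->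
    forall n1a n1d n2 : R, 0 < n1a -> 0 < n1d -> 0 < n2 ->
      nbar2 l2 mu C - 2 * sqrt eps < n2 < nbar2 l2 mu C + 2 * sqrt eps ->
      eps / Chat < n1a + n1d < sqrt eps ->
      n1d / n1a = pi1d / pi1a ->
      p * C * (n1a + n2) / (kappa * mu + sigma) > n1d / n1a /\
      n1d / n1a > (mu - l1 + C * (n2 + n1a) + tau * n2) / sigma.
Proof.
  set (r := pi1d / pi1a).
  assert (Hr : 0 < r) by (apply Rdiv_lt_0_compat; assumption).
  assert (HK : 0 < kappa * mu + sigma) by nra.
  destruct (left_eigvec2_ratio _ _ _ _ _ _ _ Hpia Hpi) as [E1 E2]. fold r in E1, E2.
  assert (Hltpos : 0 < lt).
  { apply (perron_root2_pos (J11 l1 l2 mu C tau) (J12 l2 mu p) (J21 sigma)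
             (J22 mu sigma kappa) lt r Hr E1 E2).
    - unfold J12. nra.
    - unfold J21. assumption.
    - apply det_J_neg; assumption. }
  destruct (small_scale_exists (2 * p * C) (3 * C + 2 * tau) (lt * r) lt)
    as [s0 [Hs0 Hsmall]]; try nra.
  exists (s0 * s0). split; [nra |].
  intros eps Heps n1a n1d n2 Hn1a Hn1d _ [Hlo Hhi] [_ Hsum] Hrat.
  rewrite Hrat. fold r.
  assert (Hs : sqrt eps <= s0) by (left; apply sqrt_lt_of_lt_square; assumption).
  destruct (Hsmall (sqrt eps) (conj (sqrt_pos eps) Hs)) as [Hs1 Hs2].
  pose proof (nbar2_spec l2 mu C HC Hl2mu) as Hnb.
  unfold J12, J21, J22 in E1, E2.
  split.
  - apply (ratio_upper_bound l2 mu C p (kappa * mu + sigma) lt r (nbar2 l2 mu C) n1a n2 (sqrt eps));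
      try assumption; lra.
  - apply (ratio_lower_bound l1 l2 mu C tau sigma lt r (nbar2 l2 mu C) n1a n2 (sqrt eps));
      try assumption; lra.
Qed.
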